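(* Let $C:\mathbb{R}^n\to\mathbb{R}$ be convex, increasing and $\mathbf 1$-invariant with $C(\vec 0)>0$, and define $\varphi:\mathbb{R}^n_{>0}\to\mathbb{R}$ by $\varphi(\vec q)=\alpha$, where $\alpha>0$ is the unique positive number with $C(-\vec q/\alpha)=0$. Then $\varphi$ is 1-homogeneous, concave and increasing.
   Context: $\mathbf 1=(1,\dots,1)$. $C$ is $\mathbf 1$-invariant if $C(\vec q+\alpha\mathbf 1)=C(\vec q)+\alpha$ for all $\vec q,\alpha$; a function is increasing if $f(\vec q)>f(\vec q')$ whenever $\vec q\succeq\vec q'$ coordinatewise and $\vec q\neq\vec q'$ (both in its domain). $\mathbb{R}^n_{>0}$ is the set of vectors with all coordinates strictly positive. A function $f$ on $\mathbb{R}^n_{>0}$ is 1-homogeneous if $f(\alpha\vec q)=\alpha f(\vec q)$ for all $\vec q\in\mathbb{R}^n_{>0}$ and $\alpha>0$. (The existence and uniqueness of such $\alpha$ for every $\vec q\in\mathbb{R}^n_{>0}$ holds under these hypotheses.) *)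

From HB Require Import structures.
From mathcomp Require Import all_boot all_order all_algebra.
From mathcomp Require Import boolp classical_sets reals.
Set Implicit Arguments. Unset Strict Implicit. Unset Printing Implicit Defensive.
Import Order.TTheory GRing.Theory Num.Theory.
Local Open Scope ring_scope.

Section Defs.
Variables (R : realType) (n : nat).

Definition ones : 'rV[R]_n := const_mx 1.

Definition vge (q q' : 'rV[R]_n) : Prop := forall i, q' 0 i <= q 0 i.

Definition vpos (q : 'rV[R]_n) : Prop := forall i, 0 < q 0 i.

Definition convex_fun (C : 'rV[R]_n -> R) : Prop :=
  forall (x y : 'rV[R]_n) (t : R), 0 <= t -> t <= 1 ->
    C (t *: x + (1 - t) *: y) <= t * C x + (1 - t) * C y.

Definition increasing_fun (C : 'rV[R]_n -> R) : Prop :=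
  forall q q' : 'rV[R]_n, vge q q' -> q <> q' -> C q' < C q.

Definition one_invariant (C : 'rV[R]_n -> R) : Prop :=
  forall (q : 'rV[R]_n) (a : R), C (q + a *: ones) = C q + a.

Definition phi (C : 'rV[R]_n -> R) (q : 'rV[R]_n) : R :=
  xget 0 [set a : R | 0 < a /\ C (- (a^-1 *: q)) = 0].

Definition homogeneous1_pos (f : 'rV[R]_n -> R) : Prop :=
  forall (q : 'rV[R]_n) (a : R), vpos q -> 0 < a -> f (a *: q) = a * f q.

Definition concave_pos (f : 'rV[R]_n -> R) : Prop :=
  forall (x y : 'rV[R]_n) (t : R), vpos x -> vpos y -> 0 <= t -> t <= 1 ->
    t * f x + (1 - t) * f y <= f (t *: x + (1 - t) *: y).

Definition increasing_pos (f : 'rV[R]_n -> R) : Prop :=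
  forall q q' : 'rV[R]_n, vpos q -> vpos q' -> vge q q' -> q <> q' -> f q' < f q.

End Defs.

From HB Require Import structures.
From mathcomp Require Import all_boot all_order all_algebra.
From mathcomp Require Import boolp classical_sets reals.
From mathcomp Require Import topology normedtype.
From mathcomp Require Import ring lra.
Import Order.TTheory GRing.Theory Num.Theory.
Import numFieldNormedType.Exports.
Local Open Scope ring_scope.

(* Along a ray t |-> -t q with q > 0, C is strictly decreasing (C is increasing)
   and Lipschitz (by 1-invariance), starts at C 0 > 0 and becomes negative, so it
   vanishes exactly at t = 1 / phi(q): the sign of C(-q/a) tells on which side
   of phi(q) the number a lies.  For concavity,
   with c = t phi(x) + (1-t) phi(y), the point -(t x + (1-t) y)/c is a convex
   combination of -x/phi(x) and -y/phi(y), so convexity gives C <= 0 there and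
   hence phi(t x + (1-t) y) >= c.  For monotonicity, q >= q', q <> q' gives
   C(-q/phi(q')) < C(-q'/phi(q')) = 0. *)

Lemma lipschitz_continuous (R : realFieldType) (f : R -> R) (k : R) :
  (forall x y, `|f x - f y| <= k * `|x - y|) -> continuous f.
Proof.
move=> fk x; apply/cvgrPdist_lt => e e0.
have k1_gt0 : 0 < `|k| + 1 by rewrite ltr_pwDr ?normr_ge0.
near=> y; apply: (le_lt_trans (fk x y)).
apply: (@le_lt_trans _ _ ((`|k| + 1) * `|x - y|)).
  by rewrite ler_wpM2r // (le_trans (ler_norm k)) // lerDl.
rewrite -ltr_pdivlMl //.
by near: y; apply: cvgr_dist_lt; rewrite // mulrC divr_gt0.
Unshelve. all: by end_near. Qed.

Lemma convex_comb_gt0 (R : realDomainType) (a b t : R) :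
  0 < a -> 0 < b -> 0 <= t -> t <= 1 -> 0 < t * a + (1 - t) * b.
Proof.
move=> a0 b0; rewrite le_eqVlt => /predU1P[<- _|t0 t1].
  by rewrite mul0r add0r subr0 mul1r.
by apply: ltr_pwDl; [exact: mulr_gt0 | rewrite mulr_ge0 ?subr_ge0 ?(ltW b0)].
Qed.

Lemma scale_convex_comb (F : fieldType) (V : lmodType F) (x y : V) (a b t : F) :
  a != 0 -> b != 0 -> t * a + (1 - t) * b != 0 ->
  let w := t * a / (t * a + (1 - t) * b) in
  (t * a + (1 - t) * b)^-1 *: (t *: x + (1 - t) *: y) =
    w *: (a^-1 *: x) + (1 - w) *: (b^-1 *: y).
Proof.
move=> a0 b0 c0 w; have -> : 1 - w = (1 - t) * b / (t * a + (1 - t) * b).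
  by rewrite /w; field.
by rewrite scalerDr !scalerA /w; congr (_ *: _ + _ *: _); field; rewrite ?a0 ?b0 c0.
Qed.

Section Orthant.
Context {R : realType} {n : nat}.
Implicit Types (q x y : 'rV[R]_n).

Lemma vpos_lbound {q} : vpos q -> exists2 m, 0 < m & forall i, m <= q 0 i.
Proof.
case: n q => [|k] q qp; first by exists 1 => // -[].
have [j _ jmin] := @arg_minP _ _ 'I_k.+1 ord0 xpredT (fun i => q 0 i) isT.
by exists (q 0 j) => // i; exact: jmin.
Qed.

Lemma vpos_convex_comb x y t :
  vpos x -> vpos y -> 0 <= t -> t <= 1 -> vpos (t *: x + (1 - t) *: y).
Proof. by move=> xp yp t0 t1 i; rewrite !mxE convex_comb_gt0. Qed.

End Orthant.

Section Phi.
Variables (R : realType) (n : nat) (C : 'rV[R]_n -> R).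
Hypotheses (Ccvx : convex_fun C) (Cinc : increasing_fun C).
Hypotheses (Cinv : one_invariant C) (C0 : 0 < C 0).
Implicit Types (q x y : 'rV[R]_n).

Lemma increasing_fun_le x y : vge x y -> C y <= C x.
Proof. by move=> xy; have [->|/eqP ne] := eqVneq x y; last exact/ltW/Cinc. Qed.

Lemma le_shift_ones x y d : vge (y + d *: ones R n) x -> C x <= C y + d.
Proof. by rewrite -Cinv; apply: increasing_fun_le. Qed.

Lemma one_invariant_dim_gt0 : (0 < n)%N.
Proof.
case: (posnP n) => // n0.
have ones0 : ones R n = 0 by apply/matrixP => i [j]; rewrite n0.
by have := Cinv 0 1; rewrite ones0 scaler0 addr0; lra.
Qed.

Lemma ray_lt {q s t} : vpos q -> s < t -> C (- (t *: q)) < C (- (s *: q)).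
Proof.
move=> qp st; pose i0 := Ordinal one_invariant_dim_gt0.
apply: Cinc => [i|/rowP/(_ i0)/eqP]; rewrite !mxE.
  by rewrite lerN2 ler_pM2r ?(qp i) ?ltW.
by rewrite eqr_opp (inj_eq (mulIf (lt0r_neq0 (qp i0)))) lt_eqF.
Qed.

Lemma ray_le {q s t} : vpos q -> s <= t -> C (- (t *: q)) <= C (- (s *: q)).
Proof. by move=> qp; rewrite le_eqVlt => /predU1P[->//|st]; exact/ltW/ray_lt. Qed.

Lemma ray_continuous q : continuous (fun t : R => C (- (t *: q))).
Proof.
apply: (@lipschitz_continuous _ _ (\sum_i `|q 0 i|)) => s t.
have shift u v : C (- (u *: q)) <= C (- (v *: q)) + (\sum_i `|q 0 i|) * `|u - v|.
  apply: le_shift_ones => i; rewrite !mxE mulr1 -lerBlDl opprK addrC -mulrBl.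
  rewrite (le_trans (ler_norm _)) // normrM distrC mulrC ler_wpM2r //.
  by rewrite (bigD1 i) //= lerDl sumr_ge0.
by rewrite ler_distl shift lerBlDr distrC shift.
Qed.

Lemma ray_root {q} : vpos q -> exists2 s : R, 0 < s & C (- (s *: q)) = 0.
Proof.
move=> qp; have [m m0 mq] := vpos_lbound qp.
have ray0 : C (- (0 *: q)) = C 0 by rewrite scale0r oppr0.
pose T := C 0 / m; have T0 : 0 < T by rewrite divr_gt0.
have rayT : C (- (T *: q)) <= 0.
  apply: le_trans (le_shift_ones _ 0 (- (T * m)) _) _.
    by move=> i; rewrite !mxE add0r mulr1 lerN2 ler_pM2l.
  by rewrite /T divfK ?gt_eqF // subrr.
have [s] : exists2 s : R, s \in `[0, T] & C (- (s *: q)) = 0.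
  apply: IVT (ltW T0) (continuous_subspaceT (ray_continuous q)) _.
  by rewrite ray0 ge_min le_max rayT (ltW C0) orbT.
rewrite in_itv /= => /andP[s_ge0 _] rays; exists s => //.
rewrite lt_neqAle s_ge0 andbT; apply/eqP => s0.
by move: rays; rewrite -s0 ray0 => /eqP; rewrite gt_eqF.
Qed.

Lemma phi_root {q} : vpos q -> 0 < phi C q /\ C (- ((phi C q)^-1 *: q)) = 0.
Proof.
move=> qp; have [s s0 rays] := ray_root qp.
suff : [set a : R | 0 < a /\ C (- (a^-1 *: q)) = 0]%classic (phi C q) by [].
by apply: xgetPex; exists s^-1; split; rewrite ?invr_gt0 ?invrK.
Qed.

Lemma phi_ge {q a} : vpos q -> 0 < a -> C (- (a^-1 *: q)) <= 0 -> a <= phi C q.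
Proof.
move=> qp a0 ha; have [p0 hp] := phi_root qp.
rewrite leNgt; apply/negP => pa.
have : a^-1 < (phi C q)^-1 by rewrite ltf_pV2 ?posrE.
by move/(ray_lt qp); rewrite hp; lra.
Qed.

Lemma phi_gt {q a} : vpos q -> 0 < a -> C (- (a^-1 *: q)) < 0 -> a < phi C q.
Proof.
move=> qp a0 ha; have [p0 hp] := phi_root qp.
rewrite ltNge; apply/negP => pa.
have : a^-1 <= (phi C q)^-1 by rewrite lef_pV2 ?posrE.
by move/(ray_le qp); rewrite hp; lra.
Qed.

Lemma phi_eq {q a} : vpos q -> 0 < a -> C (- (a^-1 *: q)) = 0 -> phi C q = a.
Proof.
move=> qp a0 ha; have [p0 hp] := phi_root qp.
apply/le_anti; rewrite phi_ge ?ha // andbT leNgt; apply/negP => ap.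
have : (phi C q)^-1 < a^-1 by rewrite ltf_pV2 ?posrE.
by move/(ray_lt qp); rewrite ha hp ltxx.
Qed.

Lemma phi_homogeneous : homogeneous1_pos (phi C).
Proof.
move=> q a qp a0; have [p0 hp] := phi_root qp.
apply: phi_eq => [i||]; [by rewrite mxE mulr_gt0 | exact: mulr_gt0 |].
by rewrite scalerA invfM mulrAC mulVf ?mul1r ?gt_eqF.
Qed.

Lemma phi_concave : concave_pos (phi C).
Proof.
move=> x y t xp yp t0 t1.
have [a0 ha] := phi_root xp; have [b0 hb] := phi_root yp.
move: a0 b0 ha hb; set a := phi C x; set b := phi C y => a0 b0 ha hb.
have c0 : 0 < t * a + (1 - t) * b by apply: convex_comb_gt0.
apply: phi_ge; [exact: vpos_convex_comb | exact: c0 |].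
rewrite scale_convex_comb ?gt_eqF //; set w := _ / _.
rewrite opprD -[- (w *: _)]scalerN -[- ((1 - w) *: _)]scalerN.
have w0 : 0 <= w := divr_ge0 (mulr_ge0 t0 (ltW a0)) (ltW c0).
have w1 : w <= 1.
  by rewrite ler_pdivrMr // mul1r lerDl mulr_ge0 ?subr_ge0 ?(ltW b0).
by apply: le_trans (Ccvx _ _ _ w0 w1) _; rewrite ha hb !mulr0 addr0.
Qed.

Lemma phi_increasing : increasing_pos (phi C).
Proof.
move=> q q' qp qp' qq' ne; have [b0 hb] := phi_root qp'.
apply: phi_gt => //; rewrite -hb; apply: Cinc => [i|].
  by rewrite !mxE lerN2 ler_pM2l ?invr_gt0.
by move/oppr_inj/(scalerI (invr_neq0 (lt0r_neq0 b0)))/esym.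
Qed.

End Phi.

Theorem lemma4p4 (R : realType) (n : nat) (C : 'rV[R]_n -> R) :
  convex_fun C -> increasing_fun C -> one_invariant C -> 0 < C 0 ->
  homogeneous1_pos (phi C) /\ concave_pos (phi C) /\ increasing_pos (phi C).
Proof.
move=> Ccvx Cinc Cinv C0.
by split; [|split]; [exact: phi_homogeneous | exact: phi_concave | exact: phi_increasing].
Qed.
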